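(* Let $G$ be a finite simple unmixed graph with $r$ minimal vertex covers, and let $\mathcal{LS}(I_c(G))$ be the linear syzygy matrix of $I_c(G)$. Then the graph $\mathcal{G}_{I_c(G)}$ is connected if and only if ${\rm rank}(\mathcal{LS}(I_c(G)))=r-1$.
   Context: $G$ has vertex set $\{t_1,\ldots,t_s\}$, $S=K[t_1,\ldots,t_s]$, $K$ a field. $G$ is unmixed if all minimal vertex covers (inclusion-minimal sets of vertices meeting every edge) have the same size. Let $C_1,\ldots,C_r$ be the minimal vertex covers and $u_i=\prod_{t_j\in C_i}t_j$; $I_c(G)=(u_1,\ldots,u_r)$. The graph $\mathcal{G}_{I_c(G)}$ has vertex set $\{C_1,\ldots,C_r\}$, with $\{C_i,C_j\}$ ($i\ne j$) an edge iff $|C_i\cup C_j|=|C_i|+1$. The linear syzygy matrix $\mathcal{LS}(I_c(G))$ is the $r\times|E(\mathcal{G}_{I_c(G)})|$ matrix whose columns are the vectors $t_\ell e_i-t_ke_j\in S^r$ such that $t_\ell u_i=t_k u_j$, one for each edge $\{C_i,C_j\}$ (it is the zero matrix if there are no such syzygies). The rank is the determinantal rank: the largest $k$ such that some $k\times k$ minor is nonzero. *)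

From HB Require Import structures.
From mathcomp Require Import all_boot all_order all_algebra.
From mathcomp Require Import mpoly.
Set Implicit Arguments. Unset Strict Implicit. Unset Printing Implicit Defensive.
Import Order.TTheory GRing.Theory.
Local Open Scope ring_scope.

(* A finite simple graph on vertices t_1..t_s, indexed by 'I_s:
   a symmetric irreflexive relation. *)
Definition simple_graph (s : nat) (e : rel 'I_s) : Prop :=
  ssrbool.symmetric e /\ irreflexive e.

Definition vertex_cover (s : nat) (e : rel 'I_s) (C : {set 'I_s}) : bool :=
  [forall x, forall y, e x y ==> (x \in C) || (y \in C)].

Definition min_covers (s : nat) (e : rel 'I_s) : {set {set 'I_s}} :=
  [set C | minset (vertex_cover e) C].

Definition unmixed (s : nat) (e : rel 'I_s) : Prop :=
  forall C D, C \in min_covers e -> D \in min_covers e -> #|C| = #|D|.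

(* r = number of minimal vertex covers, C_i (i : 'I_r) their enumeration. *)
Definition ncov (s : nat) (e : rel 'I_s) : nat := #|min_covers e|.
Definition cov (s : nat) (e : rel 'I_s) (i : 'I_(ncov e)) : {set 'I_s} :=
  enum_val i.
Arguments cov {s} e i.

Definition cov_adj (s : nat) (e : rel 'I_s) : rel 'I_(ncov e) :=
  fun i j => (i != j) && (#|cov e i :|: cov e j| == #|cov e i| + 1)%N.
Arguments cov_adj {s} e i j.

Definition cov_graph_connected (s : nat) (e : rel 'I_s) : Prop :=
  forall i j : 'I_(ncov e), connect (cov_adj e) i j.

Definition cov_edges (s : nat) (e : rel 'I_s) : {set 'I_(ncov e) * 'I_(ncov e)} :=
  [set p : 'I_(ncov e) * 'I_(ncov e) | (p.1 < p.2)%N && cov_adj e p.1 p.2].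
Arguments cov_edges {s} e.

Definition monom (K : fieldType) (s : nat) (A : {set 'I_s}) : {mpoly K[s]} :=
  \prod_(x in A) 'X_x.

(* Linear syzygy matrix: the column for the edge {C_i,C_j} (i<j) is
   t_l e_i - t_k e_j, where {l} = C_j \ C_i and {k} = C_i \ C_j
   (so t_l u_i = t_k u_j); t_l is written as the monomial of C_j \ C_i. *)
Definition LS (K : fieldType) (s : nat) (e : rel 'I_s)
  : 'M[{mpoly K[s]}]_(ncov e, #|cov_edges e|) :=
  \matrix_(a, c)
    let p := @enum_val _ (mem (cov_edges e)) c in
    if a == p.1 then monom K (cov e p.2 :\: cov e p.1)
    else if a == p.2 then - monom K (cov e p.1 :\: cov e p.2)
    else 0.

Definition has_nonzero_minor (R : comRingType) (m n : nat) (A : 'M[R]_(m, n))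
  (k : nat) : bool :=
  [exists f : {ffun 'I_k -> 'I_m}, exists g : {ffun 'I_k -> 'I_n},
     [&& injectiveb f, injectiveb g & \det (mxsub f g A) != 0]].

Definition det_rank (R : comRingType) (m n : nat) (A : 'M[R]_(m, n)) : nat :=
  \max_(k < (minn m n).+1 | has_nonzero_minor A k) k.

From HB Require Import structures.
From mathcomp Require Import all_boot all_order all_algebra.
From mathcomp Require Import mpoly.
From mathcomp Require Import zify.
Set Implicit Arguments. Unset Strict Implicit. Unset Printing Implicit Defensive.
Import Order.TTheory GRing.Theory.
Local Open Scope ring_scope.

(* A set X of covers closed under adjacency gives the syzygy (u_i)_{i in X} of
   the columns of LS, because a column only involves an adjacent pair and
   t_l u_i = t_k u_j.  Hence a minor whose rows contain such an X vanishes.  A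
   nonzero k-minor omits only r - k rows, so it must miss a point of [set: 'I_r],
   giving rank <= r - 1, and, when the graph of covers is disconnected, a point
   of a component and of its complement, giving rank <= r - 2.  Conversely,
   setting all variables to 1 turns LS into the signed incidence matrix of the
   graph of covers, whose left kernel consists of the vectors constant on
   components; so it has rank r - 1 for a connected graph, and its nonzero
   minors lift to LS. *)

Lemma has_nonzero_minorP (R : comNzRingType) m n (A : 'M[R]_(m, n)) k :
  reflect (exists f : 'I_k -> 'I_m, exists g : 'I_k -> 'I_n,
             [/\ injective f, injective g & \det (mxsub f g A) != 0])
          (has_nonzero_minor A k).
Proof.
apply: (iffP existsP) => [[f /existsP [g /and3P [/injectiveP injf /injectiveP injg]]]
                        | [f [g [injf injg detA]]]].
  by exists f, g.
exists [ffun b => f b]; apply/existsP; exists [ffun b => g b]; apply/and3P; split.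
- by apply/injectiveP => b b'; rewrite !ffunE => /injf.
- by apply/injectiveP => b b'; rewrite !ffunE => /injg.
- suff -> : mxsub [ffun b => f b] [ffun b => g b] A = mxsub f g A by [].
  by apply/matrixP => b b'; rewrite !mxE !ffunE.
Qed.

Lemma has_nonzero_minor_rank (F : fieldType) m n (B : 'M[F]_(m, n)) :
  has_nonzero_minor B (\rank B).
Proof.
pose f := maxrankfun B; pose C := (rowsub f B)^T.
have rankC : \rank C = \rank B by rewrite mxrank_tr (eqP (maxrowsub_free B)).
move: (maxrankfun C) (@maxrankfun_inj _ _ _ C) (maxrowsub_free C); rewrite rankC.
move=> g injg g_free; apply/has_nonzero_minorP; exists f, g.
split=> //; first exact: maxrankfun_inj.
have -> : mxsub f g B = (rowsub g C)^T by apply/matrixP => b b'; rewrite !mxE.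
by rewrite det_tr -unitfE -unitmxE -row_free_unit.
Qed.

Lemma has_nonzero_minor_map (R S : comNzRingType) (phi : {rmorphism R -> S})
    m n (A : 'M[R]_(m, n)) k :
  has_nonzero_minor (map_mx phi A) k -> has_nonzero_minor A k.
Proof.
case/has_nonzero_minorP => f [g [injf injg]]; rewrite -map_mxsub det_map_mx.
move=> det_neq0; apply/has_nonzero_minorP; exists f, g; split=> //.
by apply: contraNneq det_neq0 => ->; rewrite rmorph0.
Qed.

Lemma mxrank_map_leq_det_rank (R : comNzRingType) (F : fieldType)
    (phi : {rmorphism R -> F}) m n (A : 'M[R]_(m, n)) :
  (\rank (map_mx phi A) <= det_rank A)%N.
Proof.
have rank_lt : (\rank (map_mx phi A) < (minn m n).+1)%N.
  by rewrite ltnS leq_min rank_leq_row rank_leq_col.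
exact: (leq_bigmax_cond (Ordinal rank_lt) (has_nonzero_minor_map (has_nonzero_minor_rank _))).
Qed.

Lemma det_mxsub_eq0 (R : idomainType) m n k (A : 'M[R]_(m, n))
    (f : 'I_k -> 'I_m) (g : 'I_k -> 'I_n) (w : 'rV[R]_m) :
  injective f -> w != 0 -> w *m A = 0 ->
  (forall a, w 0 a != 0 -> a \in codom f) ->
  \det (mxsub f g A) = 0.
Proof.
move=> injf w_neq0 wA0 w_supp; apply/eqP/det0P.
(* the restriction of w to the selected rows is a left-kernel vector of the minor *)
exists (\row_b w 0 (f b)).
  have /existsP [a /[dup] /w_supp /codomP [b ->] wfb] : [exists a, w 0 a != 0].
    apply: contraNT w_neq0 => /existsPn w0.
    by apply/eqP/rowP => a; rewrite mxE; apply/eqP/negbNE.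
  by apply: contraNneq wfb => /rowP /(_ b); rewrite !mxE => ->.
have -> : mxsub f g A = colsub g (rowsub f A) by apply/matrixP => b b'; rewrite !mxE.
rewrite mulmx_colsub; apply/rowP => b; rewrite !mxE.
have /rowP /(_ (g b)) := wA0; rewrite !mxE => wA0_gb; rewrite -[RHS]wA0_gb.
rewrite [RHS](bigID (mem [set f b' | b' in setT])) /= [X in _ = _ + X]big1 ?addr0; last first.
  move=> a a_notin; apply/eqP; rewrite mulf_eq0; apply/orP; left.
  by apply: contraR a_notin => /w_supp /codomP [b' ->]; rewrite imset_f.
rewrite big_imset /=; last exact: in2W injf.
by apply: eq_big => [b'|b' _]; rewrite ?inE ?mxE.
Qed.

Lemma leq_mxrank_const_ker (F : fieldType) m n (B : 'M[F]_(m, n)) :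
  (forall v : 'rV_m, v *m B = 0 -> forall i j, v 0 i = v 0 j) ->
  (m.-1 <= \rank B)%N.
Proof.
move=> ker_const.
suff : (\rank (kermx B) <= 1)%N by rewrite mxrank_ker; lia.
case: m B ker_const => [|m] B ker_const; first exact: leq_trans (rank_leq_row _) _.
apply: leq_trans (rank_leq_row (const_mx 1 : 'rV[F]_m.+1)).
apply/mxrankS/row_subP => k.
have ker_k : row k (kermx B) *m B = 0 by rewrite -row_mul mulmx_ker row0.
suff -> : row k (kermx B) = row k (kermx B) 0 0 *: const_mx 1 by rewrite scalemx_sub.
by apply/rowP => j; have := ker_const _ ker_k j 0; rewrite !mxE mulr1.
Qed.

Lemma card_ord_avoid k r (f : 'I_k -> 'I_r) (S : {set 'I_r}) :
  injective f -> (forall b, f b \notin S) -> (k + #|S| <= r)%N.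
Proof.
move=> injf f_notin_S.
have : codom f \subset ~: S by apply/subsetP => _ /codomP [b ->]; rewrite inE.
move/subset_leq_card; rewrite card_codom // card_ord.
move=> le_k; have := cardsC S; rewrite card_ord => /eq_leq; apply: leq_trans.
by rewrite addnC leq_add2l.
Qed.

Lemma mulmx_col_supp2 (R : pzSemiRingType) m n (M : 'M[R]_(m, n)) (v : 'rV_m) c i j :
  i != j -> (forall a, a != i -> a != j -> M a c = 0) ->
  (v *m M) 0 c = v 0 i * M i c + v 0 j * M j c.
Proof.
move=> neq_ij M_supp; rewrite mxE (bigD1 i) // (bigD1 j) 1?eq_sym //= big1 ?addr0 //.
by move=> a /andP [a_neq_j a_neq_i]; rewrite M_supp ?mulr0.
Qed.

Lemma monom_mul_setD (K : fieldType) s (C D : {set 'I_s}) :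
  monom K C * monom K (D :\: C) = monom K (C :|: D).
Proof.
rewrite /monom [RHS](big_setID C); congr (_ * _); apply: eq_bigl => x;
  by rewrite !inE; case: (x \in C); case: (x \in D).
Qed.

Lemma meval_monom1 (K : fieldType) s (C : {set 'I_s}) :
  (monom K C).@[fun _ => 1] = 1.
Proof. by rewrite /monom rmorph_prod; apply: big1 => x _; apply: mevalXU. Qed.

Lemma monom_neq0 (K : fieldType) s (C : {set 'I_s}) : monom K C != 0.
Proof. by apply: contra_neq (@oner_neq0 K) => C0; rewrite -(meval_monom1 K C) C0 meval0. Qed.

Section LinearSyzygyMatrix.

Variables (K : fieldType) (s : nat) (e : rel 'I_s).
Hypothesis unmixed_e : unmixed e.

Local Notation r := (ncov e).
Local Notation edge c := (@enum_val _ (mem (cov_edges e)) c).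

Lemma cov_adj_sym : ssrbool.symmetric (cov_adj e).
Proof.
move=> i j; rewrite /cov_adj eq_sym setUC.
by rewrite (unmixed_e (enum_valP i) (enum_valP j)).
Qed.

Lemma cov_edgeP c : ((edge c).1 < (edge c).2)%N && cov_adj e (edge c).1 (edge c).2.
Proof. by have := enum_valP c; rewrite inE. Qed.

Lemma cov_edge_neq c : (edge c).1 != (edge c).2.
Proof. by case/andP: (cov_edgeP c); rewrite ltn_neqAle => /andP []. Qed.

Lemma mulmx_LS (w : 'rV[{mpoly K[s]}]_r) c :
  (w *m LS K e) 0 c =
    w 0 (edge c).1 * monom K (cov e (edge c).2 :\: cov e (edge c).1)
  - w 0 (edge c).2 * monom K (cov e (edge c).1 :\: cov e (edge c).2).
Proof.
rewrite (mulmx_col_supp2 w (cov_edge_neq c)) => [|a a1 a2]; rewrite !mxE /=.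
  by rewrite eqxx eq_sym (negPf (cov_edge_neq c)) eqxx mulrN.
by rewrite (negPf a1) (negPf a2).
Qed.

Definition monom_row (X : {set 'I_r}) : 'rV[{mpoly K[s]}]_r :=
  \row_a (if a \in X then monom K (cov e a) else 0).

Lemma monom_row_LS (X : {set 'I_r}) :
  closed (cov_adj e) X -> monom_row X *m LS K e = 0.
Proof.
move=> closedX; apply/rowP => c; rewrite mulmx_LS !mxE.
have /andP [_ /closedX <-] := cov_edgeP c.
case: ifP => _; last by rewrite !mul0r subr0.
by rewrite !monom_mul_setD setUC subrr.
Qed.

Lemma det_LS_minor_eq0 (X : {set 'I_r}) k (f : 'I_k -> 'I_r) g :
  closed (cov_adj e) X -> X != set0 -> injective f -> X \subset codom f ->
  \det (mxsub f g (LS K e)) = 0.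
Proof.
move=> closedX /set0Pn [x xX] injf sub_f.
apply: (det_mxsub_eq0 _ injf _ (monom_row_LS closedX)) => [|a].
  by apply/eqP => /rowP /(_ x); rewrite !mxE xX; apply/eqP/monom_neq0.
rewrite mxE; case: ifP => [aX _|_]; last by rewrite eqxx.
exact: (subsetP sub_f).
Qed.

Lemma LS_minor_avoids k : has_nonzero_minor (LS K e) k ->
  exists2 f : 'I_k -> 'I_r, injective f &
    forall X : {set 'I_r}, closed (cov_adj e) X -> X != set0 ->
      exists2 a, a \in X & a \notin codom f.
Proof.
case/has_nonzero_minorP => f [g [injf _ det_neq0]]; exists f => // X closedX X_neq0.
apply/subsetPn; apply: contra_neqN det_neq0 => sub_f.
exact: det_LS_minor_eq0 closedX X_neq0 injf sub_f.
Qed.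

Lemma det_rank_LS_leq : (det_rank (LS K e) <= r.-1)%N.
Proof.
apply/bigmax_leqP => k /LS_minor_avoids [f injf avoids].
have k_le_r : (k <= r)%N by rewrite -ltnS (leq_trans (ltn_ord k)) // ltnS geq_minl.
have [r0|r_gt0] := posnP r; first by lia.
have [||a _ a_notin] := avoids setT; first by move=> ? ? _; rewrite !inE.
  by apply/set0Pn; exists (Ordinal r_gt0).
have := card_ord_avoid (S := [set a]) injf; rewrite cards1.
suff /[swap] /[apply] : forall b, f b \notin [set a] by lia.
by move=> b; rewrite inE; apply: contraNneq a_notin => <-; apply: codom_f.
Qed.

Lemma det_rank_LS_disconnected i j :
  ~~ connect (cov_adj e) i j -> (det_rank (LS K e) <= r - 2)%N.
Proof.
move=> not_ij; apply/bigmax_leqP => k /LS_minor_avoids [f injf avoids].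
pose X := [set a | connect (cov_adj e) i a].
have closedX : closed (cov_adj e) X.
  by move=> a b ab; rewrite !inE; exact: (connect_closed (sym_connect_sym cov_adj_sym) i ab).
have [|a aX a_notin] := avoids X closedX.
  by apply/set0Pn; exists i; rewrite inE connect0.
have closedXC : closed (cov_adj e) (~: X).
  by move=> a' b' ab; rewrite !in_setC (closedX _ _ ab).
have [|b bX b_notin] := avoids (~: X) closedXC.
  by apply/set0Pn; exists j; rewrite !inE.
have neq_ab : a != b by apply: contraTneq bX => <-; rewrite inE negbK.
have := card_ord_avoid (S := [set a; b]) injf; rewrite cards2 neq_ab.
suff /[swap] /[apply] : forall c, f c \notin [set a; b] by lia.
move=> c; rewrite !inE; apply/norP; split; apply/eqP => fc.
  by move: a_notin; rewrite -fc codom_f.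
by move: b_notin; rewrite -fc codom_f.
Qed.

Definition LS1 : 'M[K]_(r, #|cov_edges e|) := map_mx (meval (fun _ => 1)) (LS K e).

Lemma mulmx_LS1 (v : 'rV[K]_r) c :
  (v *m LS1) 0 c = v 0 (edge c).1 - v 0 (edge c).2.
Proof.
rewrite (mulmx_col_supp2 v (cov_edge_neq c)) => [|a a1 a2]; rewrite !mxE /=.
  by rewrite eqxx eq_sym (negPf (cov_edge_neq c)) eqxx mevalN !meval_monom1 mulr1 mulrN1.
by rewrite (negPf a1) (negPf a2) meval0.
Qed.

Lemma LS1_ker_adj (v : 'rV[K]_r) a b :
  v *m LS1 = 0 -> cov_adj e a b -> v 0 a = v 0 b.
Proof.
wlog lt_ab : a b / (a < b)%N => [hwlog vLS1 ab|vLS1 ab].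
  have /andP [neq_ab _] := ab.
  case: (ltngtP a b) => [lt_ab|lt_ba|/val_inj eq_ab]; last by rewrite eq_ab.
  - exact: hwlog.
  - by rewrite (hwlog b a) // cov_adj_sym.
have ab_edge : (a, b) \in cov_edges e by rewrite inE lt_ab.
have /rowP /(_ (enum_rank_in ab_edge (a, b))) := vLS1.
by rewrite mulmx_LS1 enum_rankK_in // mxE => /eqP; rewrite subr_eq0 => /eqP.
Qed.

Lemma rank_LS1 : cov_graph_connected e -> (r.-1 <= \rank LS1)%N.
Proof.
move=> connected_e; apply: leq_mxrank_const_ker => v vLS1 i j.
have closed_i : closed (cov_adj e) [pred a | v 0 a == v 0 i].
  by move=> a b ab; rewrite !inE (LS1_ker_adj vLS1 ab).
by have := closed_connect closed_i (connected_e i j); rewrite !inE eqxx => /esym /eqP.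
Qed.

Lemma det_rank_LS_connected :
  cov_graph_connected e -> (r.-1 <= det_rank (LS K e))%N.
Proof. by move/rank_LS1/leq_trans; apply; apply: mxrank_map_leq_det_rank. Qed.

End LinearSyzygyMatrix.

Theorem proposition4p1 (K : fieldType) (s : nat) (e : rel 'I_s) :
  simple_graph e -> unmixed e ->
  cov_graph_connected e <-> det_rank (LS K e) = (ncov e).-1.
Proof.
move=> _ unmixed_e; split=> [connected_e | rank_LS i j].
  by apply/eqP; rewrite eqn_leq det_rank_LS_leq // det_rank_LS_connected.
apply/idPn => not_ij.
have neq_ij : i != j by apply: contraNneq not_ij => ->; apply: connect0.
have := det_rank_LS_disconnected K unmixed_e not_ij; rewrite rank_LS.
have := ltn_ord i; have := ltn_ord j; move: neq_ij; rewrite -val_eqE /=; lia.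
Qed.
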